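(* Let $\nu\ge\frac12$. Then for all $x>0$, $$I_{\nu+1}^2(x)-I_\nu(x)I_{\nu+2}(x)<\frac{2\nu}{x}I_\nu(x)I_{\nu+1}(x).$$ Consequently, if $K>\nu+1$ and $r>0$ satisfies $r=\Psi_\nu(2Kr)$ with $\Psi_\nu(x)=I_{\nu+1}(x)/I_\nu(x)$, then $$r<\sqrt{1-\frac{1}{K}}.$$
   Context: $I_\nu$ denotes the modified Bessel function of the first kind of order $\nu$. *)

From Stdlib Require Import Reals.
From Coquelicot Require Import Coquelicot.
Open Scope R_scope.

Definition Gamma (s : R) : R :=
  RInt_gen (fun t => Rpower t (s - 1) * exp (- t))
           (at_right 0) (Rbar_locally p_infty).

Definition BesselI (nu x : R) : R :=
  Series (fun k : nat =>
    Rpower (x / 2) (2 * INR k + nu) / (INR (Factorial.fact k) * Gamma (INR k + nu + 1))).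

Definition Psi (nu x : R) : R := BesselI (nu + 1) x / BesselI nu x.

(* Write I_(nu+j)(x) = (x/2)^(nu+j) / Gamma(nu+1) * S_j((x/2)^2) with power series
   S_j satisfying S_j' = S_(j+1) and, from Bessel's equation, y S_2 = S_0 - (nu+1) S_1;
   identifying the coefficients needs Gamma(s+1) = s Gamma(s), proved by integrating
   by parts on (0, oo).  Both claims then reduce to the positivity, for y > 0, of
   Q(y) = S_0^2 - S_0 S_1 - y S_1^2.  Indeed Q(0) = nu/(nu+1) > 0 and
   (y^(nu+1/2) Q(y))' = y^(nu-1/2) ((nu-1/2)(S_0^2 + y S_1^2) + S_0 S_1 / 2) > 0
   when nu >= 1/2.  For the second claim, r = Psi_nu(2Kr) says S_0 = K S_1 at
   y = (Kr)^2, so Q(y) > 0 becomes K^2 - K - K^2 r^2 > 0. *)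

From Stdlib Require Import Reals Lra Lia Classical_Prop.
From Coquelicot Require Import Coquelicot.
Open Scope R_scope.

Lemma exp_le_exp x y : x <= y -> exp x <= exp y.
Proof. intros [H|H]; [left; apply exp_increasing, H | subst; lra]. Qed.

Lemma ln_le_sub_1 y : 0 < y -> ln y <= y - 1.
Proof. intros Hy. pose proof (exp_ineq1_le (ln y)). rewrite exp_ln in H by exact Hy. lra. Qed.

Lemma locally_pos x : 0 < x -> locally x (fun y => 0 < y).
Proof.
  intros Hx. exists (mkposreal x Hx). intros y Hy.
  change (Rabs (y - x) < x) in Hy. apply Rabs_def2 in Hy. lra.
Qed.

Lemma filter_prod_pos_segment (P : R -> Prop) : (forall x, 0 < x -> P x) ->
  filter_prod (at_right 0) (Rbar_locally p_infty)
    (fun ab => forall x, Rmin (fst ab) (snd ab) <= x <= Rmax (fst ab) (snd ab) -> P x).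
Proof.
  intros HP. apply Filter_prod with (fun a => 0 < a) (fun b => 0 < b).
  - exists (mkposreal 1 Rlt_0_1). intros; assumption.
  - exists 0. intros; assumption.
  - intros a b Ha Hb x Hx. apply HP.
    pose proof (Rmin_pos a b Ha Hb). simpl in Hx. lra.
Qed.

Lemma continuous_pos_near_0 (f : R -> R) y : continuous f 0 -> 0 < f 0 -> 0 < y ->
  exists y1, 0 < y1 < y /\ 0 < f y1.
Proof.
  intros Hf Hf0 Hy.
  destruct (proj1 (filterlim_locally f (f 0)) Hf (mkposreal _ Hf0)) as [d Hd].
  set (y1 := Rmin (d / 2) (y / 2)).
  assert (0 < y1) by (apply Rmin_pos; pose proof (cond_pos d); lra).
  assert (y1 <= d / 2) by apply Rmin_l. assert (y1 <= y / 2) by apply Rmin_r.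
  exists y1. split; [lra|].
  assert (Hball : Rabs (y1 - 0) < d) by (rewrite Rminus_0_r, Rabs_pos_eq; pose proof (cond_pos d); lra).
  specialize (Hd y1 Hball). change (Rabs (f y1 - f 0) < f 0) in Hd.
  apply Rabs_def2 in Hd. lra.
Qed.

(** * The Gamma function *)

Definition gamma_integrand (s t : R) : R := Rpower t (s - 1) * exp (- t).

Lemma gamma_integrand_pos s t : 0 < gamma_integrand s t.
Proof. apply Rmult_lt_0_compat; apply exp_pos. Qed.

Lemma gamma_integrand_continuous s t : 0 < t -> continuous (gamma_integrand s) t.
Proof.
  intros Ht. apply (@ex_derive_continuous R_AbsRing R_NormedModule).
  unfold gamma_integrand, Rpower. auto_derive. exact Ht.
Qed.

Lemma ex_RInt_gamma_integrand s a b : 0 < a -> a <= b -> ex_RInt (gamma_integrand s) a b.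
Proof.
  intros Ha Hab. apply (@ex_RInt_continuous R_CompleteNormedModule). intros z Hz.
  rewrite Rmin_left in Hz by lra. apply gamma_integrand_continuous. lra.
Qed.

(* From [ln u <= u - 1] at [u = t / (2 (s - 1))]. *)
Definition gamma_tail_const (s : R) : R := exp ((s - 1) * (ln (2 * (s - 1)) - 1)).

Lemma gamma_integrand_le s t : 1 < s -> 0 < t ->
  gamma_integrand s t <= gamma_tail_const s * exp (- t / 2).
Proof.
  intros Hs Ht. unfold gamma_integrand, gamma_tail_const, Rpower. rewrite <- !exp_plus.
  apply exp_le_exp.
  assert (H := ln_le_sub_1 (t / (2 * (s - 1))) ltac:(apply Rdiv_lt_0_compat; lra)).
  rewrite ln_div in H by lra.
  assert (H2 : (s - 1) * (ln t - ln (2 * (s - 1))) <= (s - 1) * (t / (2 * (s - 1)) - 1))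
    by (apply Rmult_le_compat_l; lra).
  replace ((s - 1) * (t / (2 * (s - 1)) - 1)) with (t / 2 - (s - 1)) in H2 by (field; lra).
  lra.
Qed.

Lemma exp_half_lt k eps x : 0 < k -> 0 < eps -> 2 * Rabs (ln (eps / k)) < x ->
  k * exp (- x / 2) < eps.
Proof.
  intros Hk Heps Hx.
  assert (H : exp (- x / 2) < eps / k).
  { rewrite <- (exp_ln (eps / k)) by (apply Rdiv_lt_0_compat; lra).
    apply exp_increasing. pose proof (Rle_abs (- ln (eps / k))).
    rewrite Rabs_Ropp in H. lra. }
  apply Rmult_lt_compat_l with (r := k) in H; [|exact Hk].
  replace (k * (eps / k)) with eps in H by (field; lra). exact H.
Qed.

Lemma RInt_gamma_integrand_le s a b : 1 < s -> 0 < a -> a <= b ->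
  RInt (gamma_integrand s) a b <= 2 * gamma_tail_const s.
Proof.
  intros Hs Ha Hab.
  set (k := gamma_tail_const s).
  assert (Hk : 0 < k) by apply exp_pos.
  assert (Hprim : is_RInt (fun x => k * exp (- x / 2)) a b
                    (2 * k * exp (- a / 2) - 2 * k * exp (- b / 2))).
  { replace (2 * k * exp (- a / 2) - 2 * k * exp (- b / 2))
      with (-2 * k * exp (- b / 2) - -2 * k * exp (- a / 2)) by ring.
    apply (is_RInt_derive (fun x => -2 * k * exp (- x / 2))).
    - intros x _. auto_derive; [exact I | set (e := exp _); field].
    - intros x _. apply (@ex_derive_continuous R_AbsRing R_NormedModule). auto_derive. exact I. }
  apply Rle_trans with (2 * k * exp (- a / 2) - 2 * k * exp (- b / 2)).
  - rewrite <- (is_RInt_unique _ _ _ _ Hprim).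
    apply RInt_le; auto.
    + apply ex_RInt_gamma_integrand; auto.
    + eexists; exact Hprim.
    + intros x Hx. apply gamma_integrand_le; lra.
  - assert (exp (- a / 2) <= 1) by (rewrite <- exp_0; apply exp_le_exp; lra).
    pose proof (exp_pos (- b / 2)). nra.
Qed.

Lemma is_RInt_gen_at_right_0_p_infty (f : R -> R) (l : R) :
  (forall a b, 0 < a -> a <= b -> ex_RInt f a b) ->
  (forall eps, 0 < eps -> exists a0 b0, 0 < a0 /\ a0 < b0 /\
     forall a b, 0 < a <= a0 -> b0 <= b -> Rabs (RInt f a b - l) < eps) ->
  is_RInt_gen f (at_right 0) (Rbar_locally p_infty) l.
Proof.
  intros Hex Happrox P [eps HP].
  destruct (Happrox eps (cond_pos eps)) as [a0 [b0 [Ha0 [Hab0 Hint]]]].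
  apply Filter_prod with (fun a => 0 < a <= a0) (fun b => b0 <= b).
  - exists (mkposreal a0 Ha0). intros y Hy Hy0.
    change (Rabs (y - 0) < a0) in Hy. apply Rabs_def2 in Hy. lra.
  - exists b0. intros; lra.
  - intros a b Ha Hb. exists (RInt f a b). split.
    + apply (@RInt_correct R_CompleteNormedModule), Hex; lra.
    + apply HP, Hint; assumption.
Qed.

Lemma RInt_gamma_integrand_Chasles3 s a a1 b1 b : 0 < a -> a <= a1 -> a1 <= b1 -> b1 <= b ->
  RInt (gamma_integrand s) a b =
  RInt (gamma_integrand s) a a1 + RInt (gamma_integrand s) a1 b1 + RInt (gamma_integrand s) b1 b.
Proof.
  intros.
  rewrite <- (@RInt_Chasles R_CompleteNormedModule _ a b1 b)
    by (apply ex_RInt_gamma_integrand; lra).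
  rewrite <- (@RInt_Chasles R_CompleteNormedModule _ a a1 b1)
    by (apply ex_RInt_gamma_integrand; lra).
  reflexivity.
Qed.

(* The truncated integrals are bounded, so their supremum [l] exists; a truncation
   [a1, b1] within [eps] of [l] controls every larger truncation by positivity. *)
Lemma gamma_integral_converges s : 1 < s -> exists l, 0 < l /\
  is_RInt_gen (gamma_integrand s) (at_right 0) (Rbar_locally p_infty) l.
Proof.
  intros Hs.
  set (E := fun v => exists a b, 0 < a /\ a <= b /\ v = RInt (gamma_integrand s) a b).
  assert (HB : bound E).
  { exists (2 * gamma_tail_const s). intros v [a [b [Ha [Hab ->]]]].
    apply RInt_gamma_integrand_le; auto. }
  assert (HE : exists v, E v) by (exists (RInt (gamma_integrand s) 1 2), 1, 2; repeat split; lra).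
  destruct (completeness E HB HE) as [l [Hub Hlub]].
  assert (H12 : 0 < RInt (gamma_integrand s) 1 2).
  { apply RInt_gt_0; [lra | intros; apply gamma_integrand_pos
                          | intros; apply gamma_integrand_continuous; lra]. }
  exists l. split.
  { apply Rlt_le_trans with (RInt (gamma_integrand s) 1 2); auto.
    apply Hub. exists 1, 2. repeat split; lra. }
  apply is_RInt_gen_at_right_0_p_infty; [apply ex_RInt_gamma_integrand|].
  intros eps Heps.
  destruct (classic (exists v, E v /\ l - eps < v))
    as [[v [[a1 [b1 [Ha1 [Hab1 ->]]]] Hv]] | Hno].
  2: { exfalso. assert (l <= l - eps); [|lra]. apply Hlub. intros v Ev.
       destruct (Rle_or_lt v (l - eps)) as [H|H]; auto. exfalso; apply Hno; exists v; auto. }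
  exists a1, (b1 + 1). repeat split; try lra.
  intros a b Ha Hb.
  assert (Hin : RInt (gamma_integrand s) a b <= l) by (apply Hub; exists a, b; repeat split; lra).
  rewrite (RInt_gamma_integrand_Chasles3 s a a1 b1 b) in * by lra.
  assert (0 <= RInt (gamma_integrand s) a a1 /\ 0 <= RInt (gamma_integrand s) b1 b) as [? ?].
  { split; apply RInt_ge_0; try lra; try (apply ex_RInt_gamma_integrand; lra);
      intros; apply Rlt_le, gamma_integrand_pos. }
  apply Rabs_def1; lra.
Qed.

Lemma is_RInt_gen_Gamma s : 1 < s ->
  is_RInt_gen (gamma_integrand s) (at_right 0) (Rbar_locally p_infty) (Gamma s).
Proof.
  intros Hs. destruct (gamma_integral_converges s Hs) as [l [_ Hl]].
  replace (Gamma s) with l; [exact Hl|]. symmetry. apply (is_RInt_gen_unique _ _ Hl).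
Qed.

Lemma Gamma_pos s : 1 < s -> 0 < Gamma s.
Proof.
  intros Hs. destruct (gamma_integral_converges s Hs) as [l [Hl HG]].
  replace (Gamma s) with l; [exact Hl|]. symmetry. apply (is_RInt_gen_unique _ _ HG).
Qed.

Definition gamma_boundary (s x : R) : R := - (Rpower x s * exp (- x)).

Lemma is_derive_gamma_boundary s t : 0 < t ->
  is_derive (gamma_boundary s) t (gamma_integrand (s + 1) t - s * gamma_integrand s t).
Proof.
  intros Ht. unfold gamma_boundary, gamma_integrand, Rpower. auto_derive; [exact Ht|].
  replace (s + 1 - 1) with s by ring.
  replace (s * ln t) with ((s - 1) * ln t + ln t) by ring.
  rewrite exp_plus, exp_ln by exact Ht. field. lra.
Qed.

Lemma abs_gamma_boundary s x : Rabs (gamma_boundary s x) = gamma_integrand (s + 1) x.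
Proof.
  unfold gamma_boundary. rewrite Rabs_Ropp, Rabs_pos_eq.
  - unfold gamma_integrand. replace (s + 1 - 1) with s by ring. reflexivity.
  - apply Rlt_le, Rmult_lt_0_compat; [unfold Rpower|]; apply exp_pos.
Qed.

Lemma gamma_boundary_at_0 s : 1 <= s -> filterlim (gamma_boundary s) (at_right 0) (locally 0).
Proof.
  intros Hs. apply filterlim_locally. intros eps.
  exists (mkposreal (Rmin 1 eps) (Rmin_pos _ _ Rlt_0_1 (cond_pos eps))).
  intros x Hx Hx0. change (Rabs (x - 0) < Rmin 1 eps) in Hx.
  rewrite Rminus_0_r, Rabs_pos_eq in Hx by lra.
  pose proof (Rmin_l 1 eps). pose proof (Rmin_r 1 eps).
  change (Rabs (gamma_boundary s x - 0) < eps). rewrite Rminus_0_r.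
  unfold gamma_boundary, Rpower. rewrite Rabs_Ropp.
  rewrite Rabs_pos_eq by (apply Rlt_le, Rmult_lt_0_compat; apply exp_pos).
  assert (ln x < 0) by (rewrite <- ln_1; apply ln_increasing; lra).
  assert (exp (s * ln x) <= x) by (rewrite <- (exp_ln x) at 2 by lra; apply exp_le_exp; nra).
  assert (exp (- x) < 1) by (rewrite <- exp_0; apply exp_increasing; lra).
  pose proof (exp_pos (s * ln x)). nra.
Qed.

Lemma gamma_boundary_at_p_infty s : 0 < s ->
  filterlim (gamma_boundary s) (Rbar_locally p_infty) (locally 0).
Proof.
  intros Hs. apply filterlim_locally. intros eps.
  assert (Hk : 0 < gamma_tail_const (s + 1)) by apply exp_pos.
  set (M := 2 * Rabs (ln (eps / gamma_tail_const (s + 1)))).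
  exists (Rmax 0 M). intros x Hx.
  pose proof (Rmax_l 0 M). pose proof (Rmax_r 0 M).
  change (Rabs (gamma_boundary s x - 0) < eps). rewrite Rminus_0_r, abs_gamma_boundary.
  eapply Rle_lt_trans; [apply gamma_integrand_le; lra|].
  apply exp_half_lt; [exact Hk | apply cond_pos | unfold M in *; lra].
Qed.

(* Integration by parts: [x^s e^(-x)] vanishes at both ends. *)
Lemma Gamma_succ s : 1 < s -> Gamma (s + 1) = s * Gamma s.
Proof.
  intros Hs.
  assert (HDerive : forall x, 0 < x ->
    Derive (gamma_boundary s) x = gamma_integrand (s + 1) x - s * gamma_integrand s x)
    by (intros; apply is_derive_unique, is_derive_gamma_boundary; assumption).
  assert (Hparts : is_RInt_gen (Derive (gamma_boundary s)) (at_right 0) (Rbar_locally p_infty) (0 - 0)).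
  { apply is_RInt_gen_Derive.
    - apply filter_prod_pos_segment. intros x Hx. eexists. apply is_derive_gamma_boundary, Hx.
    - apply filter_prod_pos_segment. intros x Hx.
      apply continuous_ext_loc with (fun y => gamma_integrand (s + 1) y - s * gamma_integrand s y).
      + apply filter_imp with (fun y => 0 < y); [|apply locally_pos, Hx].
        intros y Hy. symmetry. apply HDerive, Hy.
      + apply (continuous_minus (V := R_NormedModule));
          [|apply (continuous_mult (K := R_AbsRing)); [apply continuous_const|]];
          apply gamma_integrand_continuous, Hx.
    - apply gamma_boundary_at_0. lra.
    - apply gamma_boundary_at_p_infty. lra. }
  assert (Hsum := is_RInt_gen_plus _ _ _ _ Hparts (is_RInt_gen_scal _ s _ (is_RInt_gen_Gamma s Hs))).
  apply is_RInt_gen_unique.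
  replace (s * Gamma s) with (plus (0 - 0) (scal s (Gamma s))) by (unfold plus, scal; simpl; unfold mult; simpl; ring).
  eapply is_RInt_gen_ext; [|exact Hsum].
  eapply filter_imp; [|apply (filter_prod_pos_segment (fun x =>
    plus (Derive (gamma_boundary s) x) (scal s (gamma_integrand s x)) = gamma_integrand (s + 1) x))].
  - intros ab H x Hx. apply H. lra.
  - intros x Hx. simpl. rewrite HDerive by exact Hx.
    unfold plus, scal; simpl; unfold mult; simpl. ring.
Qed.

(** * Bessel power series *)

Fixpoint rising (a : R) (n : nat) : R :=
  match n with O => 1 | S m => rising a m * (a + INR m) end.

Lemma rising_succ a n : rising a (S n) = rising a n * (a + INR n).
Proof. reflexivity. Qed.

Lemma rising_pos a n : 0 < a -> 0 < rising a n.
Proof.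
  intros Ha. induction n as [|n IH]; simpl; [lra|].
  apply Rmult_lt_0_compat; [exact IH|]. pose proof (pos_INR n). lra.
Qed.

Lemma Gamma_add_nat a n : 1 < a -> Gamma (a + INR n) = Gamma a * rising a n.
Proof.
  intros Ha. induction n as [|n IH]; simpl rising.
  - simpl. rewrite Rplus_0_r. ring.
  - rewrite S_INR, <- Rplus_assoc, Gamma_succ, IH by (pose proof (pos_INR n); lra). ring.
Qed.

Definition bessel_coef (nu : R) (j k : nat) : R :=
  / (INR (Factorial.fact k) * rising (nu + 1) (k + j)).

Definition bessel_series (nu : R) (j : nat) (y : R) : R := PSeries (bessel_coef nu j) y.

Lemma bessel_coef_pos nu j k : 0 < nu -> 0 < bessel_coef nu j k.
Proof.
  intros Hnu. apply Rinv_0_lt_compat, Rmult_lt_0_compat.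
  - apply lt_0_INR, Factorial.lt_O_fact.
  - apply rising_pos. lra.
Qed.

Lemma BesselI_bessel_series nu j x : 0 < nu -> 0 < x ->
  BesselI (nu + INR j) x =
  Rpower (x / 2) (nu + INR j) / Gamma (nu + 1) * bessel_series nu j ((x / 2) ^ 2).
Proof.
  intros Hnu Hx. unfold BesselI, bessel_series, PSeries.
  unfold Rdiv at 2. rewrite <- Series_scal_l. apply Series_ext. intro k.
  replace (2 * INR k + (nu + INR j)) with ((nu + INR j) + INR (2 * k))
    by (rewrite mult_INR; simpl; ring).
  rewrite Rpower_plus, Rpower_pow, <- pow_mult by lra.
  replace (INR k + (nu + INR j) + 1) with (nu + 1 + INR (k + j)) by (rewrite plus_INR; ring).
  rewrite Gamma_add_nat by lra.
  assert (0 < Gamma (nu + 1)) by (apply Gamma_pos; lra).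
  assert (0 < rising (nu + 1) (k + j)) by (apply rising_pos; lra).
  assert (0 < INR (Factorial.fact k)) by (apply lt_0_INR, Factorial.lt_O_fact).
  unfold bessel_coef, Rdiv. field. lra.
Qed.

Lemma CV_radius_bessel_coef nu j : 0 < nu -> CV_radius (bessel_coef nu j) = p_infty.
Proof.
  intros Hnu. apply CV_radius_infinite_DAlembert.
  - intro n. apply Rgt_not_eq, bessel_coef_pos, Hnu.
  - apply is_lim_seq_le_le with (fun _ => 0) (fun n => / INR (S n)).
    + intro n.
      assert (0 < rising (nu + 1) (n + j)) by (apply rising_pos; lra).
      assert (0 < INR (Factorial.fact n)) by (apply lt_0_INR, Factorial.lt_O_fact).
      assert (0 < INR (S n)) by (apply lt_0_INR; lia).
      assert (1 <= nu + 1 + INR (n + j)) by (pose proof (pos_INR (n + j)); lra).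
      replace (bessel_coef nu j (S n) / bessel_coef nu j n)
        with (/ (INR (S n) * (nu + 1 + INR (n + j)))).
      2: { unfold bessel_coef. simpl (S n + j)%nat. rewrite fact_simpl, mult_INR.
           simpl rising. field. repeat split; lra. }
      rewrite Rabs_pos_eq by (apply Rlt_le, Rinv_0_lt_compat, Rmult_lt_0_compat; lra).
      split; [apply Rlt_le, Rinv_0_lt_compat, Rmult_lt_0_compat; lra|].
      apply Rinv_le_contravar; nra.
    + apply is_lim_seq_const.
    + apply (is_lim_seq_incr_1 (fun n => / INR n)).
      replace (Finite 0) with (Rbar_inv p_infty) by reflexivity.
      apply is_lim_seq_inv; [apply is_lim_seq_INR | discriminate].
Qed.

Lemma ex_pseries_bessel_coef nu j y : 0 < nu -> ex_pseries (bessel_coef nu j) y.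
Proof.
  intros Hnu. apply ex_pseries_R, ex_series_Rabs, CV_disk_inside.
  rewrite CV_radius_bessel_coef by exact Hnu. exact I.
Qed.

Lemma is_derive_bessel_series nu j y : 0 < nu ->
  is_derive (bessel_series nu j) y (bessel_series nu (S j) y).
Proof.
  intros Hnu. unfold bessel_series.
  rewrite <- (PSeries_ext (PS_derive (bessel_coef nu j))).
  - apply is_derive_PSeries. rewrite CV_radius_bessel_coef by exact Hnu. exact I.
  - intro n. unfold PS_derive, bessel_coef.
    rewrite fact_simpl, mult_INR, Nat.add_succ_r, Nat.add_succ_l.
    assert (0 < rising (nu + 1) (S (n + j))) by (apply rising_pos; lra).
    assert (0 < INR (Factorial.fact n)) by (apply lt_0_INR, Factorial.lt_O_fact).
    assert (0 < INR (S n)) by (apply lt_0_INR; lia).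
    field. repeat split; lra.
Qed.

Lemma bessel_series_recurrence nu j y : 0 < nu ->
  y * bessel_series nu (S (S j)) y =
  bessel_series nu j y - (nu + 1 + INR j) * bessel_series nu (S j) y.
Proof.
  intros Hnu. unfold bessel_series.
  rewrite <- PSeries_incr_1, <- PSeries_scal, <- PSeries_minus.
  2: apply ex_pseries_bessel_coef, Hnu.
  2: apply ex_pseries_scal; [unfold mult; simpl; intros; ring | apply ex_pseries_bessel_coef, Hnu].
  apply PSeries_ext. intros [|m];
    unfold PS_incr_1, PS_minus, PS_scal, bessel_coef, plus, opp, scal; simpl; unfold mult; simpl.
  - assert (0 < rising (nu + 1) j) by (apply rising_pos; lra).
    pose proof (pos_INR j). unfold zero; simpl. field. lra.
  - rewrite !Nat.add_succ_r, !rising_succ, !S_INR, !plus_INR, mult_INR.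
    assert (0 < rising (nu + 1) (m + j)) by (apply rising_pos; lra).
    assert (0 < INR (Factorial.fact m)) by (apply lt_0_INR, Factorial.lt_O_fact).
    pose proof (pos_INR m). pose proof (pos_INR j).
    field. repeat split; nra.
Qed.

Lemma bessel_series_ge_coef0 nu j y : 0 < nu -> 0 <= y ->
  bessel_coef nu j 0 <= bessel_series nu j y.
Proof.
  intros Hnu Hy. unfold bessel_series, PSeries.
  rewrite Series_incr_1 by (apply ex_pseries_R, ex_pseries_bessel_coef, Hnu).
  rewrite pow_O, Rmult_1_r.
  assert (0 <= Series (fun k => bessel_coef nu j (S k) * y ^ S k)).
  { assert (Hzero : Series (fun _ : nat => 0) = 0).
    { rewrite (Series_ext _ (fun _ : nat => 0 * 0)) by (intro; ring).
      rewrite Series_scal_l. ring. }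
    rewrite <- Hzero. apply Series_le.
    - intro n. split; [lra|].
      apply Rmult_le_pos; [apply Rlt_le, bessel_coef_pos, Hnu | apply pow_le, Hy].
    - apply (ex_series_incr_1 (fun k => bessel_coef nu j k * y ^ k)).
      apply ex_pseries_R, ex_pseries_bessel_coef, Hnu. }
  lra.
Qed.

(** * The Turán-type form *)

Definition turan_form (nu y : R) : R :=
  bessel_series nu 0 y ^ 2 - bessel_series nu 0 y * bessel_series nu 1 y
  - y * bessel_series nu 1 y ^ 2.

Lemma turan_form_0 nu : 0 < nu -> turan_form nu 0 = nu / (nu + 1).
Proof.
  intros Hnu. unfold turan_form, bessel_series. rewrite !PSeries_0.
  unfold bessel_coef. simpl. field. lra.
Qed.

Lemma continuous_turan_form nu : 0 < nu -> continuous (turan_form nu) 0.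
Proof.
  intros Hnu. apply (@ex_derive_continuous R_AbsRing R_NormedModule).
  unfold turan_form. auto_derive.
  repeat split; eexists; apply is_derive_bessel_series, Hnu.
Qed.

Lemma is_derive_weighted_turan_form nu y : 0 < nu -> 0 < y ->
  is_derive (fun z => Rpower z (nu + 1 / 2) * turan_form nu z) y
    (Rpower y (nu - 1 / 2) *
     ((nu - 1 / 2) * (bessel_series nu 0 y ^ 2 + y * bessel_series nu 1 y ^ 2)
      + bessel_series nu 0 y * bessel_series nu 1 y / 2)).
Proof.
  intros Hnu Hy. unfold turan_form, Rpower. auto_derive.
  - repeat split; [exact Hy | ..]; eexists; apply is_derive_bessel_series, Hnu.
  - rewrite !(is_derive_unique _ _ _ (is_derive_bessel_series nu _ y Hnu)).
    assert (Hrec := bessel_series_recurrence nu 0 y Hnu). simpl INR in Hrec.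
    replace ((nu + 1 / 2) * ln y) with ((nu - 1 / 2) * ln y + ln y) by field.
    rewrite exp_plus, exp_ln by exact Hy.
    replace (bessel_series nu 2 y)
      with ((bessel_series nu 0 y - (nu + 1 + 0) * bessel_series nu 1 y) / y)
      by (rewrite <- Hrec; field; lra).
    field. lra.
Qed.

Lemma weighted_turan_form_lt nu y1 y2 : 1 / 2 <= nu -> 0 < y1 < y2 ->
  Rpower y1 (nu + 1 / 2) * turan_form nu y1 < Rpower y2 (nu + 1 / 2) * turan_form nu y2.
Proof.
  intros Hnu Hy.
  destruct (MVT_gen (fun z => Rpower z (nu + 1 / 2) * turan_form nu z) y1 y2
    (fun y => Rpower y (nu - 1 / 2) *
     ((nu - 1 / 2) * (bessel_series nu 0 y ^ 2 + y * bessel_series nu 1 y ^ 2)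
      + bessel_series nu 0 y * bessel_series nu 1 y / 2))) as [c [Hc Heq]].
  - intros x Hx. rewrite Rmin_left, Rmax_right in Hx by lra.
    apply is_derive_weighted_turan_form; lra.
  - intros x Hx. rewrite Rmin_left, Rmax_right in Hx by lra.
    apply derivable_continuous_pt. eexists.
    apply is_derive_Reals, is_derive_weighted_turan_form; lra.
  - rewrite Rmin_left, Rmax_right in Hc by lra.
    assert (H0 := bessel_series_ge_coef0 nu 0 c ltac:(lra) ltac:(lra)).
    assert (H1 := bessel_series_ge_coef0 nu 1 c ltac:(lra) ltac:(lra)).
    assert (Hc0 : bessel_coef nu 0 0 = 1) by (unfold bessel_coef; simpl; field).
    assert (Hc1 := bessel_coef_pos nu 1 0 ltac:(lra)).
    assert (0 < Rpower c (nu - 1 / 2)) by apply exp_pos.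
    assert (0 <= (nu - 1 / 2) * (bessel_series nu 0 c ^ 2 + c * bessel_series nu 1 c ^ 2))
      by (apply Rmult_le_pos; nra).
    assert (0 < bessel_series nu 0 c * bessel_series nu 1 c / 2) by nra.
    assert (0 < Rpower c (nu - 1 / 2) *
      ((nu - 1 / 2) * (bessel_series nu 0 c ^ 2 + c * bessel_series nu 1 c ^ 2)
       + bessel_series nu 0 c * bessel_series nu 1 c / 2) * (y2 - y1))
      by (repeat apply Rmult_lt_0_compat; lra).
    lra.
Qed.

Lemma turan_form_pos nu y : 1 / 2 <= nu -> 0 < y -> 0 < turan_form nu y.
Proof.
  intros Hnu Hy.
  destruct (continuous_pos_near_0 (turan_form nu) y) as [y1 [Hy1 HT1]].
  - apply continuous_turan_form. lra.
  - rewrite turan_form_0 by lra. apply Rdiv_lt_0_compat; lra.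
  - exact Hy.
  - assert (Hlt := weighted_turan_form_lt nu y1 y Hnu Hy1).
    assert (0 < Rpower y1 (nu + 1 / 2)) by apply exp_pos.
    assert (0 < Rpower y (nu + 1 / 2)) by apply exp_pos.
    nra.
Qed.

Lemma BesselI_series_012 nu x : 0 < nu -> 0 < x ->
  BesselI nu x = Rpower (x / 2) nu / Gamma (nu + 1) * bessel_series nu 0 ((x / 2) ^ 2) /\
  BesselI (nu + 1) x =
    Rpower (x / 2) nu / Gamma (nu + 1) * (x / 2) * bessel_series nu 1 ((x / 2) ^ 2) /\
  BesselI (nu + 2) x =
    Rpower (x / 2) nu / Gamma (nu + 1) * (x / 2) ^ 2 * bessel_series nu 2 ((x / 2) ^ 2).
Proof.
  intros Hnu Hx.
  assert (Hg : Gamma (nu + 1) <> 0) by (apply Rgt_not_eq, Gamma_pos; lra).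
  assert (Hpow2 : Rpower (x / 2) 2 = (x / 2) ^ 2)
    by (rewrite <- Rpower_pow by lra; simpl; f_equal; ring).
  pose proof (BesselI_bessel_series nu 0 x Hnu Hx) as E0.
  pose proof (BesselI_bessel_series nu 1 x Hnu Hx) as E1.
  pose proof (BesselI_bessel_series nu 2 x Hnu Hx) as E2.
  simpl INR in E0, E1, E2. replace (1 + 1) with 2 in E2 by ring.
  rewrite Rplus_0_r in E0.
  rewrite Rpower_plus, Rpower_1 in E1 by lra.
  rewrite Rpower_plus, Hpow2 in E2.
  repeat split; [rewrite E0 | rewrite E1 | rewrite E2]; field; exact Hg.
Qed.

Lemma BesselI_turan_type_inequality nu x : 1 / 2 <= nu -> 0 < x ->
  BesselI (nu + 1) x ^ 2 - BesselI nu x * BesselI (nu + 2) x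
  < 2 * nu / x * BesselI nu x * BesselI (nu + 1) x.
Proof.
  intros Hnu Hx.
  destruct (BesselI_series_012 nu x ltac:(lra) Hx) as [E0 [E1 E2]].
  set (t := x / 2) in *. set (c := Rpower t nu / Gamma (nu + 1)) in *.
  assert (Ht : 0 < t) by (unfold t; lra).
  assert (Hc : 0 < c) by (apply Rdiv_lt_0_compat; [apply exp_pos | apply Gamma_pos; lra]).
  assert (Hrec := bessel_series_recurrence nu 0 (t ^ 2) ltac:(lra)). simpl INR in Hrec.
  assert (HT := turan_form_pos nu (t ^ 2) Hnu ltac:(apply pow_lt, Ht)).
  assert (HS2 : bessel_series nu 2 (t ^ 2)
    = (bessel_series nu 0 (t ^ 2) - (nu + 1 + 0) * bessel_series nu 1 (t ^ 2)) / t ^ 2)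
    by (rewrite <- Hrec; field; lra).
  rewrite E0, E1, E2, HS2. replace x with (2 * t) by (unfold t; field).
  apply Rlt_0_minus.
  match goal with |- 0 < ?gap => replace gap with (c ^ 2 * turan_form nu (t ^ 2)) end.
  - apply Rmult_lt_0_compat; [apply pow_lt, Hc | exact HT].
  - unfold turan_form. field. lra.
Qed.

Lemma Psi_fixed_point_lt nu K r : 1 / 2 <= nu -> 0 < K -> 0 < r -> r = Psi nu (2 * K * r) ->
  r < sqrt (1 - 1 / K).
Proof.
  intros Hnu HK Hr Hfix.
  assert (Hx : 0 < 2 * K * r) by nra.
  destruct (BesselI_series_012 nu (2 * K * r) ltac:(lra) Hx) as [E0 [E1 _]].
  unfold Psi in Hfix. rewrite E0, E1 in Hfix.
  replace (2 * K * r / 2) with (K * r) in Hfix by field.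
  set (c := Rpower (K * r) nu / Gamma (nu + 1)) in Hfix.
  assert (Hc : 0 < c) by (apply Rdiv_lt_0_compat; [apply exp_pos | apply Gamma_pos; lra]).
  set (y := (K * r) ^ 2) in Hfix.
  assert (HT := turan_form_pos nu y Hnu ltac:(apply pow_lt; nra)). unfold turan_form in HT.
  assert (H0 := bessel_series_ge_coef0 nu 0 y ltac:(lra) ltac:(apply pow2_ge_0)).
  assert (H1 := bessel_series_ge_coef0 nu 1 y ltac:(lra) ltac:(apply pow2_ge_0)).
  assert (Hc1 := bessel_coef_pos nu 1 0 ltac:(lra)).
  set (a := bessel_series nu 0 y) in *. set (b := bessel_series nu 1 y) in *.
  assert (Hb : 0 < b) by lra.
  assert (Ha : 0 < a) by (apply Rlt_le_trans with (bessel_coef nu 0 0); [apply bessel_coef_pos|]; lra).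
  assert (Hab : a = K * b).
  { apply Rmult_eq_reg_l with r; [|lra].
    rewrite Hfix at 1. field. split; lra. }
  rewrite Hab in HT. unfold y in HT.
  assert (Hgap : 0 < K * K - K - K * K * (r * r)).
  { assert (0 < b * b * (K * K - K - K * K * (r * r))) by (simpl in HT; nra).
    assert (0 < b * b) by nra. nra. }
  rewrite <- (sqrt_pow2 r) by lra.
  apply sqrt_lt_1_alt. split; [apply pow2_ge_0|].
  apply Rmult_lt_reg_l with (K * K); [nra|].
  replace (K * K * (1 - 1 / K)) with (K * K - K) by (field; lra). simpl. nra.
Qed.

Theorem mainTheorem5 (nu : R) (hnu : 1 / 2 <= nu) :
  (forall x : R, 0 < x ->
     BesselI (nu + 1) x ^ 2 - BesselI nu x * BesselI (nu + 2) x
     < 2 * nu / x * BesselI nu x * BesselI (nu + 1) x)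
  /\
  (forall K r : R, nu + 1 < K -> 0 < r -> r = Psi nu (2 * K * r) ->
     r < sqrt (1 - 1 / K)).
Proof.
  split.
  - intros x Hx. apply BesselI_turan_type_inequality; assumption.
  - intros K r HK Hr Hfix. apply (Psi_fixed_point_lt nu); [assumption | lra | assumption | assumption].
Qed.
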